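(* Let $X$ be a set and let $\mathcal{L}$ be a nest on $X$. Then $\mathcal{L}$ is interlocking if and only if, for each $L\in\mathcal{L}$, if $X-L$ is a lower set with respect to $\triangleleft_{\mathcal{L}^c}$, then $L$ is a lower set with respect to $\triangleleft_{\mathcal{L}}$.
   Context: A nest on $X$ is a family $\mathcal{L}$ of subsets of $X$ such that for all $M,N\in\mathcal{L}$, either $M\subseteq N$ or $N\subseteq M$. For a family $\mathcal{S}$ of subsets of $X$, define $x \triangleleft_{\mathcal{S}} y$ iff there exists $S\in\mathcal{S}$ with $x\in S$ and $y\notin S$. Let $\mathcal{L}^c=\{X-L : L\in\mathcal{L}\}$. A family $\mathcal{S}$ of subsets of $X$ is interlocking if for every $T\in\mathcal{S}$ with $T=\bigcap\{S : T\subseteq S,\ S\in\mathcal{S}-\{T\}\}$ one has $T=\bigcup\{S : S\subseteq T,\ S\in\mathcal{S}-\{T\}\}$. For a relation $\triangleleft$ on $X$ and $A\subseteq X$, let ${\downarrow}A=\{x\in X : \exists y\in A,\ x\triangleleft y\}$; $A$ is a lower set with respect to $\triangleleft$ if $A={\downarrow}A$. *)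

From mathcomp Require Import all_boot.
From mathcomp Require Import boolp classical_sets.
Set Implicit Arguments. Unset Strict Implicit. Unset Printing Implicit Defensive.
Local Open Scope classical_set_scope.

Definition nest (X : Type) (L : set (set X)) : Prop :=
  forall M N, L M -> L N -> M `<=` N \/ N `<=` M.

Definition tri (X : Type) (S : set (set X)) (x y : X) : Prop :=
  exists S0, S S0 /\ S0 x /\ ~ S0 y.

Definition compl_fam (X : Type) (L : set (set X)) : set (set X) :=
  [set ~` A | A in L].

(* interlocking: for T in S, if T = /\ {S in S - {T} : T <= S} then
   T = \/ {S in S - {T} : S <= T}.  (Empty intersection = X.) *)
Definition interlocking (X : Type) (S : set (set X)) : Prop :=
  forall T, S T ->
    T = \bigcap_(A in [set A | S A /\ A <> T /\ T `<=` A]) A ->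
    T = \bigcup_(A in [set A | S A /\ A <> T /\ A `<=` T]) A.

Definition down (X : Type) (R : X -> X -> Prop) (A : set X) : set X :=
  [set x | exists2 y, A y & R x y].

Definition lower_set (X : Type) (R : X -> X -> Prop) (A : set X) : Prop :=
  A = down R A.

From Pilot Require Import Defs.
From mathcomp Require Import all_boot.
From mathcomp Require Import boolp classical_sets.
Local Open Scope classical_set_scope.

(* For any family, the down-set of [A] is the union of the members not containing [A],
   and the down-set of [~` A] for the complemented family is the complement of the
   intersection of the members not contained in [A].  In a nest these members are exactly
   the members strictly below, respectively strictly above, [A]; so the hypothesis and the
   conclusion of each instance of interlocking are the two lower-set conditions on [A]. *)

Lemma down_tri (X : Type) (S : set (set X)) (A : set X) :
  Defs.down (tri S) A = \bigcup_(M in [set M | S M /\ ~ A `<=` M]) M.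
Proof.
apply/seteqP; split => x.
- move=> [y Ay [M [SM [Mx My]]]]; exists M => //; split=> // AM.
  exact/My/AM.
- move=> [M [SM AM] Mx].
  have [y Ay My] : exists2 y, A y & ~ M y.
    apply: contra_notP AM => noy y Ay.
    by apply: contra_notP noy => My; exists y.
  by exists y => //; exists M.
Qed.

Lemma down_tri_compl_fam (X : Type) (S : set (set X)) (A : set X) :
  Defs.down (tri (compl_fam S)) (~` A) = ~` \bigcap_(M in [set M | S M /\ ~ M `<=` A]) M.
Proof.
rewrite down_tri setC_bigcap; apply/seteqP; split => x.
- move=> [_ [[M SM <-] nAM] nMx]; exists M => //; split => //.
  by rewrite -setCS.
- move=> [M [SM nMA] nMx]; exists (~` M) => //; split; first by exists M.
  by rewrite setCS.
Qed.

Section Nest.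
Variables (X : Type) (L : set (set X)).
Hypothesis hL : nest L.

Lemma nest_not_subset {A M : set X} : L A -> L M ->
  ~ A `<=` M <-> M <> A /\ M `<=` A.
Proof.
move=> LA LM; split.
- move=> nAM; split; first by move=> MA; apply: nAM; rewrite MA.
  by case: (hL _ _ LM LA) => // AM; exfalso; exact: nAM.
- by move=> [nMA MA] AM; apply: nMA; apply/seteqP.
Qed.

Lemma lower_set_tri_nest (A : set X) : L A ->
  lower_set (tri L) A <->
  A = \bigcup_(M in [set M | L M /\ M <> A /\ M `<=` A]) M.
Proof.
move=> LA; rewrite /lower_set down_tri.
suff -> : [set M | L M /\ ~ A `<=` M] = [set M | L M /\ M <> A /\ M `<=` A] by [].
by apply/seteqP; split => M [LM /(nest_not_subset LA LM)].
Qed.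

Lemma lower_set_tri_compl_nest (A : set X) : L A ->
  lower_set (tri (compl_fam L)) (~` A) <->
  A = \bigcap_(M in [set M | L M /\ M <> A /\ A `<=` M]) M.
Proof.
move=> LA; rewrite /lower_set down_tri_compl_fam.
have -> : [set M | L M /\ ~ M `<=` A] = [set M | L M /\ M <> A /\ A `<=` M].
  apply/seteqP; split => M [LM].
  - by move/(nest_not_subset LM LA) => [/nesym].
  - by move=> [/nesym AM MA]; split => //; apply/(nest_not_subset LM LA).
by split => [/setC_inj | /(congr1 setC)].
Qed.

End Nest.

Theorem theorem3p5 (X : Type) (L : set (set X)) (hL : nest L) :
  interlocking L <->
  (forall A, L A -> lower_set (tri (compl_fam L)) (~` A) -> lower_set (tri L) A).
Proof.
split => [interL A LA | lowerL T LT].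
- by rewrite lower_set_tri_compl_nest // lower_set_tri_nest //; exact: interL.
- by rewrite -lower_set_tri_compl_nest // -lower_set_tri_nest //; exact: lowerL.
Qed.
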